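(* Let $G$ be a looped simple graph and $\nu$ a positive integer. Then $G$ has a transverse matroid of nullity $\nu$ if and only if some looped simple graph locally equivalent to $G$ has a stable set of size $\nu$.
   Context: A looped simple graph is a finite graph in which each vertex carries at most one loop and no two distinct vertices are joined by more than one edge. ''Adjacent''/''neighbors'' refer only to distinct vertices joined by a non-loop edge; a stable set is a set of vertices no two of which are adjacent. $A(G)$ is the $V(G)\times V(G)$ matrix over $GF(2)$ with diagonal entry $1$ exactly at looped vertices and off-diagonal entry $1$ exactly for adjacent pairs. $IAS(G)=(I\mid A(G)\mid A(G)+I)$ over $GF(2)$, rows indexed by $V(G)$; for $v\in V(G)$ the $v$-columns of the three blocks are labelled $\phi_G(v),\chi_G(v),\psi_G(v)$. The isotropic matroid $M[IAS(G)]$ is the binary column matroid of $IAS(G)$ on $W(G)=\{\phi_G(v),\chi_G(v),\psi_G(v):v\in V(G)\}$. The vertex triple of $v$ is $\tau_G(v)=\{\phi_G(v),\chi_G(v),\psi_G(v)\}$. A transversal is a subset of $W(G)$ meeting each vertex triple in exactly one element; a transverse matroid of $G$ is the restriction of $M[IAS(G)]$ to a transversal. The nullity of a matroid is the size of its ground set minus its rank. Local equivalence: $G_\ell^v$ is obtained from $G$ by complementing the loop status of $v$; $G_s^v$ by complementing the adjacency status of every pair of distinct neighbors of $v$; $G_{ns}^v$ by doing this and also complementing the loop status of every neighbor of $v$. $H$ is locally equivalent to $G$ if $H$ is obtained from $G$ by a finite sequence of such operations. *)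

From HB Require Import structures.
From mathcomp Require Import all_boot all_order all_algebra.
Set Implicit Arguments. Unset Strict Implicit. Unset Printing Implicit Defensive.
Import GRing.Theory.
Local Open Scope ring_scope.

Record lgraph (V : finType) := LGraph { ladj : rel V; lloop : pred V }.

Definition lsimple (V : finType) (G : lgraph V) : Prop :=
  (forall x y, ladj G x y = ladj G y x) /\ (forall x, ladj G x x = false).

Definition stable (V : finType) (G : lgraph V) (S : {set V}) : Prop :=
  forall x y, x \in S -> y \in S -> ladj G x y = false.

Definition loc_l (V : finType) (v : V) (G : lgraph V) : lgraph V :=
  LGraph (ladj G) (fun x => if x == v then ~~ lloop G x else lloop G x).

Definition loc_s (V : finType) (v : V) (G : lgraph V) : lgraph V :=
  LGraph (fun x y => ladj G x y (+) [&& x != y, ladj G v x & ladj G v y])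
         (lloop G).

Definition loc_ns (V : finType) (v : V) (G : lgraph V) : lgraph V :=
  LGraph (fun x y => ladj G x y (+) [&& x != y, ladj G v x & ladj G v y])
         (fun x => lloop G x (+) ladj G v x).

Inductive loc_equiv (V : finType) (G : lgraph V) : lgraph V -> Prop :=
  | loc_refl : loc_equiv G G
  | loc_step_l v H : loc_equiv G H -> loc_equiv G (loc_l v H)
  | loc_step_s v H : loc_equiv G H -> loc_equiv G (loc_s v H)
  | loc_step_ns v H : loc_equiv G H -> loc_equiv G (loc_ns v H).

Definition adjmx (V : finType) (G : lgraph V) : 'M['F_2]_#|V| :=
  \matrix_(i, j) (let x := enum_val i in let y := enum_val j in
                  if x == y then (lloop G x)%:R else (ladj G x y)%:R).

Definition IAS (V : finType) (G : lgraph V) :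
  'M['F_2]_(#|V|, #|V| + (#|V| + #|V|)) :=
  row_mx 1%:M (row_mx (adjmx G) (adjmx G + 1%:M)).

(* ground set W(G): column indices of IAS(G) *)
Definition W (V : finType) := 'I_(#|V| + (#|V| + #|V|)).

Definition phiG (V : finType) (v : V) : W V := lshift _ (enum_rank v).
Definition chiG (V : finType) (v : V) : W V := rshift _ (lshift _ (enum_rank v)).
Definition psiG (V : finType) (v : V) : W V := rshift _ (rshift _ (enum_rank v)).

Definition vtriple (V : finType) (v : V) : {set W V} := [set phiG v; chiG v; psiG v].

Definition transversal (V : finType) (T : {set W V}) : Prop :=
  forall v : V, #|T :&: vtriple v| = 1%N.

Definition colrank (m p : nat) (M : 'M['F_2]_(m, p)) (S : {set 'I_p}) : nat :=
  \rank (colsub (fun i : 'I_#|S| => enum_val i) M).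

Definition restr_nullity (V : finType) (G : lgraph V) (T : {set W V}) : nat :=
  (#|T| - colrank (IAS G) T)%N.

Definition has_transverse_nullity (V : finType) (G : lgraph V) (nu : nat) : Prop :=
  exists T : {set W V}, transversal T /\ restr_nullity G T = nu.

(* A transversal amounts to choosing, for each vertex x, one of phi(x), chi(x),
   psi(x); its nullity is the corank of the square matrix whose row x is the
   chosen column of IAS(G).  Each local operation at u, combined with a suitable
   relabelling of the vertex triples, multiplies all these columns by one fixed
   invertible matrix (the identity for a loop flip, and "add the u-coordinate
   times the adjacency row of u" otherwise), so locally equivalent graphs have the
   same transverse nullities.
   If S is stable, choosing on S the element of {chi, psi} whose column vanishes
   at its own vertex, and phi elsewhere, gives rows spanning exactly the
   coordinates outside S: the nullity is |S|.  Conversely, while the vertices S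
   with a non-phi choice still see a 1 of the restricted matrix inside S x S, a
   local complementation at a vertex whose diagonal entry is 1 (first creating
   one by a local complementation at a neighbour, if the 1 is off the diagonal)
   turns that choice into phi without changing the nullity.  When no such 1 is
   left, S is stable and the nullity is |S|. *)

From Pilot Require Import Defs.
From HB Require Import structures.
From mathcomp Require Import all_boot all_order all_algebra.
From mathcomp Require Import fingroup perm.
Set Implicit Arguments. Unset Strict Implicit. Unset Printing Implicit Defensive.
Import GRing.Theory.
Local Open Scope ring_scope.

Lemma F2_addrr (a : 'F_2) : a + a = 0.
Proof. exact: (addrr_pchar2 (pchar_Fp (isT : prime 2))). Qed.

Lemma F2_addb (a b : bool) : a%:R + b%:R = (a (+) b)%:R :> 'F_2.
Proof. by case: a; case: b; rewrite /= ?addr0 ?add0r ?F2_addrr. Qed.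

Lemma F2_andb (a b : bool) : a%:R * b%:R = (a && b)%:R :> 'F_2.
Proof. by case: a; case: b; rewrite /= ?mulr0 ?mul0r ?mulr1. Qed.

Lemma rank_sum_delta (F : fieldType) n (A : {set 'I_n}) :
  \rank (\sum_(j in A) <<delta_mx 0 j : 'rV[F]_n>>)%MS = #|A|.
Proof.
have /mxdirectP -> := @mxdirect_delta F _ (mem A) n id (in2W (@inj_id _)).
by rewrite /= -sum1_card; apply: eq_bigr => j _; rewrite mxrank_gen mxrank_delta.
Qed.

Lemma sub_sum_delta (F : fieldType) n (A : {set 'I_n}) (r : 'rV[F]_n) :
  (forall j, j \notin A -> r 0 j = 0) ->
  (r <= \sum_(j in A) <<delta_mx 0 j : 'rV[F]_n>>)%MS.
Proof.
move=> r0; rewrite [r]row_sum_delta (bigID [in A]) /= [X in _ + X]big1 ?addr0.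
  by apply: summx_sub => j Pj; rewrite scalemx_sub // (sumsmx_sup j) // genmxE.
by move=> j /r0 ->; rewrite scale0r.
Qed.

Definition kphi : 'I_3 := @Ordinal 3 0 isT.
Definition kchi : 'I_3 := @Ordinal 3 1 isT.
Definition kpsi : 'I_3 := @Ordinal 3 2 isT.

Section Transversals.
Variable V : finType.
Local Notation n := #|V|.
Implicit Types (G : lgraph V) (c : V -> 'I_3).

Definition triple_elt (k : 'I_3) (x : V) : W V :=
  match val k with 0 => phiG x | 1 => chiG x | _ => psiG x end.

Lemma eq_triple_elt k k' x y :
  (triple_elt k x == triple_elt k' y) = (k == k') && (x == y).
Proof.
case: k k' => [[|[|[|//]]] ?] [[|[|[|//]]] ?];
  by rewrite /triple_elt /phiG /chiG /psiG /=
             ?(eq_rshift, eq_lshift, eq_lrshift, eq_rlshift) ?(inj_eq enum_rank_inj).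
Qed.

Lemma triple_eltP (w : W V) : exists k x, w = triple_elt k x.
Proof.
rewrite -[w]splitK; case: (split w) => [i|j] /=.
  by exists kphi, (enum_val i); rewrite /triple_elt /phiG enum_valK.
rewrite -[j]splitK; case: (split j) => i /=.
  by exists kchi, (enum_val i); rewrite /triple_elt /chiG enum_valK.
by exists kpsi, (enum_val i); rewrite /triple_elt /psiG enum_valK.
Qed.

Lemma vtripleP (w : W V) x : reflect (exists k, w = triple_elt k x) (w \in vtriple x).
Proof.
rewrite !inE; apply: (iffP idP).
  by case/orP => [/orP[]|] /eqP->; [exists kphi | exists kchi | exists kpsi].
by case=> [[[|[|[|//]]] ?] ->]; rewrite eqxx ?orbT.
Qed.

(* [ias_bit G k x y] is the entry of IAS(G) in row [y] and column [triple_elt k x]. *)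
Definition ias_bit G (k : 'I_3) (x y : V) : bool :=
  match val k with
  | 0 => y == x
  | 1 => if y == x then lloop G x else ladj G y x
  | _ => if y == x then ~~ lloop G x else ladj G y x
  end.

Lemma IAS_phi G j x : IAS G j (phiG x) = (enum_val j == x)%:R.
Proof. by rewrite /IAS /phiG row_mxEl mxE -(inj_eq enum_val_inj) enum_rankK. Qed.

Lemma IAS_chi G j x :
  IAS G j (chiG x) = (if enum_val j == x then lloop G x else ladj G (enum_val j) x)%:R.
Proof.
by rewrite /IAS /chiG row_mxEr row_mxEl mxE enum_rankK /=; case: eqP => [->|].
Qed.

Lemma IAS_psi G j x :
  IAS G j (psiG x) = (if enum_val j == x then ~~ lloop G x else ladj G (enum_val j) x)%:R.
Proof.
rewrite /IAS /psiG row_mxEr row_mxEr !mxE enum_rankK -(inj_eq enum_val_inj) enum_rankK /=.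
case: (eqVneq (enum_val j) x) => [->|_]; rewrite ?eqxx ?addr0 //.
by case: (lloop G x); rewrite /= ?add0r ?F2_addrr.
Qed.

Lemma IAS_triple_elt G k x j :
  IAS G j (triple_elt k x) = (ias_bit G k x (enum_val j))%:R.
Proof.
by case: k => [[|[|[|//]]] ?]; [apply: IAS_phi | apply: IAS_chi | apply: IAS_psi].
Qed.

Definition ias_col G k x : 'rV['F_2]_n := \row_j (ias_bit G k x (enum_val j))%:R.

Lemma row_trIAS G k x : row (triple_elt k x) (IAS G)^T = ias_col G k x.
Proof. by apply/rowP => j; rewrite [LHS]mxE [LHS]mxE IAS_triple_elt mxE. Qed.

(* A transversal is encoded by the choice [c x] of an element of each vertex triple;
   [choice_mx G c] is the transpose of the corresponding restriction of IAS(G). *)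
Definition choice_mx G c : 'M['F_2]_n :=
  \matrix_i ias_col G (c (enum_val i)) (enum_val i).

Lemma row_choice_mx G c i : row i (choice_mx G c) = ias_col G (c (enum_val i)) (enum_val i).
Proof. exact: rowK. Qed.

Definition choice_nullity G c : nat := (n - \rank (choice_mx G c))%N.

Definition choice_set c : {set W V} := [set triple_elt (c x) x | x : V].

Lemma choice_setI_vtriple c x : choice_set c :&: vtriple x = [set triple_elt (c x) x].
Proof.
apply/setP => w; rewrite in_setI in_set1; apply/andP/eqP => [[]|->].
  by case/imsetP => y _ -> /vtripleP[k /eqP]; rewrite eq_triple_elt => /andP[_ /eqP->].
by split; [exact: imset_f | apply/vtripleP; exists (c x)].
Qed.

Lemma transversal_choice_set c : Defs.transversal (choice_set c).
Proof. by move=> x; rewrite choice_setI_vtriple cards1. Qed.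

Lemma card_choice_set c : #|choice_set c| = n.
Proof.
by apply: card_imset => x y /eqP; rewrite eq_triple_elt => /andP[_ /eqP].
Qed.

Lemma choice_set_of_transversal (T : {set W V}) :
  Defs.transversal T -> exists c, T = choice_set c.
Proof.
move=> trT.
have memT x : exists k, triple_elt k x \in T.
  have /set0Pn[w /setIP[Tw /vtripleP[k Ew]]] : T :&: vtriple x != set0.
    by rewrite -card_gt0 trT.
  by exists k; rewrite -Ew.
have uniqT x k : triple_elt k x \in T -> k = xchoose (memT x).
  move: (xchooseP (memT x)); have /eqP/cards1P[w0 Ew0] := trT x.
  have inT0 k' : triple_elt k' x \in T -> triple_elt k' x = w0.
    by move=> Tk'; apply/set1P; rewrite -Ew0 inE Tk'; apply/vtripleP; exists k'.
  move=> /inT0 E1 /inT0; rewrite -E1 => /eqP; rewrite eq_triple_elt.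
  by case/andP => /eqP.
exists (fun x => xchoose (memT x)); apply/setP => w.
have [k [x ->]] := triple_eltP w.
apply/idP/imsetP => [Tk | [y _ /eqP]]; first by exists x; rewrite // -(uniqT x k Tk).
by rewrite eq_triple_elt => /andP[/eqP-> /eqP->]; exact: (xchooseP (memT y)).
Qed.

Lemma colrank_choice_set G c : colrank (IAS G) (choice_set c) = \rank (choice_mx G c).
Proof.
rewrite /colrank -mxrank_tr.
set f := fun i : 'I_#|choice_set c| => enum_val i.
have -> : (colsub f (IAS G))^T = rowsub f (IAS G)^T by apply/matrixP => i j; rewrite !mxE.
apply: eqmx_rank; apply/andP; split; apply/row_subP => i.
  rewrite row_rowsub; have /imsetP[x _ ->] : f i \in choice_set c by exact: enum_valP.
  by rewrite row_trIAS -[x]enum_rankK -row_choice_mx row_sub.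
rewrite row_choice_mx; set x := enum_val i.
have Cx : triple_elt (c x) x \in choice_set c by exact: imset_f.
by rewrite -row_trIAS -(enum_rankK_in Cx Cx) -row_rowsub row_sub.
Qed.

Lemma has_transverse_nullityP G nu :
  has_transverse_nullity G nu <-> exists c, choice_nullity G c = nu.
Proof.
rewrite /has_transverse_nullity /restr_nullity.
split => [[T [/choice_set_of_transversal[c ->] <-]] | [c <-]].
  by exists c; rewrite card_choice_set colrank_choice_set.
exists (choice_set c); split; first exact: transversal_choice_set.
by rewrite card_choice_set colrank_choice_set.
Qed.

End Transversals.

Section LocalOperations.
Variable V : finType.
Local Notation n := #|V|.
Implicit Types (G : lgraph V) (c : V -> 'I_3).

(* Relabellings of the vertex triples that accompany the local operations at [u];
   [pivot_perm G u] exchanges phi(u) with the element of the triple of [u] whose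
   column has a 1 in row [u]. *)
Definition pivot_elt G (u : V) : 'I_3 := if lloop G u then kchi else kpsi.

Definition pivot_perm G (u : V) : {perm 'I_3} := tperm kphi (pivot_elt G u).

Definition perm_loc_l (u x : V) : {perm 'I_3} :=
  if x == u then tperm kchi kpsi else 1%g.

Definition perm_loc_ns G (u x : V) : {perm 'I_3} :=
  if x == u then pivot_perm G u else 1%g.

Definition perm_loc_s G (u x : V) : {perm 'I_3} :=
  if x == u then pivot_perm G u else if ladj G u x then tperm kchi kpsi else 1%g.

Local Ltac case_bits sym irr :=
  repeat first
    [ progress rewrite /= ?permE ?perm1
    | match goal with
      | |- context[?a == ?a] => rewrite eqxx
      | |- context[?a == ?b] => is_var a; is_var b; case: (eqVneq a b) => [?|?]; subst
      | |- context[ladj ?G ?a ?a] => rewrite irr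
      | |- context[ladj ?G ?a ?b] =>
          have := sym a b; case: (ladj G a b); case: (ladj G b a) => // _
      | |- context[lloop ?G ?a] => case: (lloop G a)
      end ]; done.

Lemma ias_bit_loc_l G u k x y : lsimple G ->
  ias_bit (loc_l u G) (perm_loc_l u x k) x y = ias_bit G k x y.
Proof.
case=> sym irr; case: k => [[|[|[|//]]] ?];
  rewrite /ias_bit /perm_loc_l /kchi /kpsi /loc_l; case_bits sym irr.
Qed.

Lemma ias_bit_loc_ns G u k x y : lsimple G ->
  ias_bit (loc_ns u G) (perm_loc_ns G u x k) x y =
  ias_bit G k x y (+) (ias_bit G k x u && ladj G u y).
Proof.
case=> sym irr; case: k => [[|[|[|//]]] ?];
  rewrite /ias_bit /perm_loc_ns /pivot_perm /pivot_elt /kphi /kchi /kpsi /loc_ns;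
  case_bits sym irr.
Qed.

Lemma ias_bit_loc_s G u k x y : lsimple G ->
  ias_bit (loc_s u G) (perm_loc_s G u x k) x y =
  ias_bit G k x y (+) (ias_bit G k x u && ladj G u y).
Proof.
case=> sym irr; case: k => [[|[|[|//]]] ?];
  rewrite /ias_bit /perm_loc_s /pivot_perm /pivot_elt /kphi /kchi /kpsi /loc_s;
  case_bits sym irr.
Qed.

Definition adj_row G u : 'rV['F_2]_n := \row_j (ladj G u (enum_val j))%:R.

Definition shear_mx G u : 'M['F_2]_n := 1%:M + delta_mx (enum_rank u) 0 *m adj_row G u.

Lemma mul_shear_mx G u m (A : 'M_(m, n)) :
  A *m shear_mx G u = A + col (enum_rank u) A *m adj_row G u.
Proof. by rewrite mulmxDr mulmx1 mulmxA -colE. Qed.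

Lemma shear_mx_unit G u : ladj G u u = false -> shear_mx G u \in unitmx.
Proof.
move=> uu; pose N := delta_mx (enum_rank u) 0 *m adj_row G u.
have colS : col (enum_rank u) (shear_mx G u) = delta_mx (enum_rank u) 0.
  apply/colP => i; rewrite !mxE big_ord1 !mxE enum_rankK uu mulr0 addr0.
  by case: (i == _).
suff SS : shear_mx G u *m shear_mx G u = 1%:M by case: (mulmx1_unit SS).
rewrite mul_shear_mx colS -/N {1}/shear_mx -/N -addrA.
have -> : N + N = 0 by apply/matrixP => i j; rewrite mxE F2_addrr mxE.
by rewrite addr0.
Qed.

Lemma ias_col_shear G G' (p : V -> {perm 'I_3}) u :
  (forall k x y,
     ias_bit G' (p x k) x y = ias_bit G k x y (+) (ias_bit G k x u && ladj G u y)) ->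
  forall k x, ias_col G' (p x k) x = ias_col G k x *m shear_mx G u.
Proof.
move=> bitE k x; rewrite mul_shear_mx [col _ _]mx11_scalar mul_scalar_mx.
by apply/rowP => j; rewrite !mxE enum_rankK bitE F2_andb F2_addb.
Qed.

Lemma choice_nullity_mulmx G G' (p : V -> {perm 'I_3}) (Q : 'M['F_2]_n) c c' :
  Q \in unitmx -> (forall k x, ias_col G' (p x k) x = ias_col G k x *m Q) ->
  (forall x, c' x = p x (c x)) -> choice_nullity G' c' = choice_nullity G c.
Proof.
move=> Qu colQ c'E; rewrite /choice_nullity; congr (_ - _)%N.
have -> : choice_mx G' c' = choice_mx G c *m Q.
  by apply/row_matrixP => i; rewrite row_mul !row_choice_mx c'E colQ.
by rewrite mxrankMfree // row_free_unit.
Qed.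

Lemma choice_nullity_loc_l G u c c' : lsimple G ->
  (forall x, c' x = perm_loc_l u x (c x)) ->
  choice_nullity (loc_l u G) c' = choice_nullity G c.
Proof.
move=> sG c'E; apply: (choice_nullity_mulmx (unitmx1 _ _) _ c'E) => k x.
by rewrite mulmx1; apply/rowP => j; rewrite !mxE ias_bit_loc_l.
Qed.

Lemma choice_nullity_loc_ns G u c c' : lsimple G ->
  (forall x, c' x = perm_loc_ns G u x (c x)) ->
  choice_nullity (loc_ns u G) c' = choice_nullity G c.
Proof.
move=> sG c'E; apply: (choice_nullity_mulmx (shear_mx_unit (proj2 sG u)) _ c'E).
by apply: ias_col_shear => k x y; rewrite ias_bit_loc_ns.
Qed.

Lemma choice_nullity_loc_s G u c c' : lsimple G ->
  (forall x, c' x = perm_loc_s G u x (c x)) ->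
  choice_nullity (loc_s u G) c' = choice_nullity G c.
Proof.
move=> sG c'E; apply: (choice_nullity_mulmx (shear_mx_unit (proj2 sG u)) _ c'E).
by apply: ias_col_shear => k x y; rewrite ias_bit_loc_s.
Qed.

Lemma lsimple_loc_l u G : lsimple G -> lsimple (loc_l u G).
Proof. by []. Qed.

Lemma lsimple_loc_s u G : lsimple G -> lsimple (loc_s u G).
Proof.
case=> sym irr; split => [x y|x] /=; last by rewrite irr eqxx.
by rewrite sym eq_sym [ladj G u x && _]andbC.
Qed.

Lemma lsimple_loc_ns u G : lsimple G -> lsimple (loc_ns u G).
Proof. exact: lsimple_loc_s. Qed.

Lemma loc_equiv_lsimple G H : loc_equiv G H -> lsimple G -> lsimple H.
Proof.
elim=> [//|v K _ IH|v K _ IH|v K _ IH] /IH.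
- exact: lsimple_loc_l.
- exact: lsimple_loc_s.
- exact: lsimple_loc_ns.
Qed.

Lemma loc_equiv_trans G H K : loc_equiv G H -> loc_equiv H K -> loc_equiv G K.
Proof.
move=> GH; elim=> [//|v K' _ IH|v K' _ IH|v K' _ IH].
- exact: loc_step_l.
- exact: loc_step_s.
- exact: loc_step_ns.
Qed.

Lemma loc_equiv_choice_nullity G H c' : loc_equiv G H -> lsimple G ->
  exists c, choice_nullity G c = choice_nullity H c'.
Proof.
move=> GH sG; elim: GH c' => [|v K GK IH|v K GK IH|v K GK IH] c'; first by exists c'.
- have [c Ec] := IH (fun x => ((perm_loc_l v x)^-1)%g (c' x)).
  exists c; rewrite Ec; symmetry.
  by apply: choice_nullity_loc_l (loc_equiv_lsimple GK sG) _ => x; rewrite permKV.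
- have [c Ec] := IH (fun x => ((perm_loc_s K v x)^-1)%g (c' x)).
  exists c; rewrite Ec; symmetry.
  by apply: choice_nullity_loc_s (loc_equiv_lsimple GK sG) _ => x; rewrite permKV.
- have [c Ec] := IH (fun x => ((perm_loc_ns K v x)^-1)%g (c' x)).
  exists c; rewrite Ec; symmetry.
  by apply: choice_nullity_loc_ns (loc_equiv_lsimple GK sG) _ => x; rewrite permKV.
Qed.

End LocalOperations.

Section StableSets.
Variable V : finType.
Local Notation n := #|V|.
Implicit Types (G H : lgraph V) (c d : V -> 'I_3).

Definition choice_support c : {set V} := [set x | c x != kphi].

Lemma ias_bit_offdiag G k x y : k != kphi -> y != x -> ias_bit G k x y = ladj G y x.
Proof. by rewrite /ias_bit => + /negbTE->; case: k => [[|[|[|//]]] ?]. Qed.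

Lemma ias_bit_diag G k x : k != kphi -> ias_bit G k x x = (k == pivot_elt G x).
Proof.
by rewrite /ias_bit /pivot_elt eqxx; case: k => [[|[|[|//]]] ?] //; case: (lloop G x).
Qed.

Lemma choice_nullity_support G c :
  {in choice_support c &, forall x y, ~~ ias_bit G (c x) x y} ->
  choice_nullity G c = #|choice_support c|.
Proof.
move=> bit0; set S := choice_support c; pose A : {set 'I_n} := enum_val @^-1: ~: S.
have bitS x y : y \in S -> ~~ ias_bit G (c x) x y.
  move=> Sy; have [Sx|nSx] := boolP (x \in S); first exact: bit0.
  have /eqP-> : c x == kphi by rewrite inE negbK in nSx.
  by apply: contraNN nSx => /eqP<-.
have eqA : (choice_mx G c == \sum_(j in A) <<delta_mx 0 j : 'rV_n>>)%MS.
  apply/andP; split.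
    apply/row_subP => i; rewrite row_choice_mx; apply: sub_sum_delta => j nAj.
    have Sj : enum_val j \in S by move: nAj; rewrite !inE negbK.
    by rewrite mxE (negbTE (bitS _ _ Sj)).
  apply/sumsmx_subP => j; rewrite !inE negbK genmxE => /eqP cj.
  suff -> : delta_mx 0 j = row j (choice_mx G c) by exact: row_sub.
  by apply/rowP => i; rewrite row_choice_mx !mxE cj /ias_bit /= (inj_eq enum_val_inj).
rewrite /choice_nullity (eqmx_rank eqA) rank_sum_delta.
have -> : #|A| = #|~: S| by apply/on_card_preimset/onW_bij/enum_val_bij.
by rewrite -(cardsC S) addnK.
Qed.

Lemma stable_choice_nullity G S : stable G S -> exists c, choice_nullity G c = #|S|.
Proof.
move=> stS.
pose c x := if x \in S then (if lloop G x then kpsi else kchi) else kphi.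
have suppS : choice_support c = S.
  by apply/setP => x; rewrite inE /c; case: (x \in S); first case: (lloop G x).
exists c; rewrite -suppS; apply: choice_nullity_support; rewrite suppS => x y Sx Sy.
have cx : c x != kphi by rewrite -suppS inE in Sx.
have [->|yx] := eqVneq y x; last by rewrite ias_bit_offdiag // stS.
by rewrite ias_bit_diag // /c Sx /pivot_elt; case: (lloop G x).
Qed.

Definition reduces_to G c H d : Prop :=
  [/\ loc_equiv G H, choice_nullity H d = choice_nullity G c &
      (#|choice_support d| < #|choice_support c|)%N].

Lemma pivot_reduces G c x : lsimple G -> c x = pivot_elt G x ->
  reduces_to G c (loc_ns x G) (fun z => perm_loc_ns G x z (c z)).
Proof.
move=> sG cx; split; first exact: loc_step_ns (loc_refl G).
  exact: choice_nullity_loc_ns.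
have Sx : x \in choice_support c by rewrite inE cx /pivot_elt; case: (lloop G x).
apply/proper_card; rewrite (_ : choice_support _ = choice_support c :\ x) ?properD1 //.
apply/setP => z; rewrite !inE /perm_loc_ns.
by case: (eqVneq z x) => [->|_]; rewrite ?perm1 // cx /pivot_perm tpermR eqxx.
Qed.

Lemma edge_reduces G c x y : lsimple G ->
  x \in choice_support c -> y \in choice_support c -> ladj G x y ->
  exists H d, reduces_to G c H d.
Proof.
move=> sG Sx Sy xy; have cy : c y != kphi by rewrite inE in Sy.
have [cyP|cyN] := eqVneq (c y) (pivot_elt G y).
  by exists (loc_ns y G), (fun z => perm_loc_ns G y z (c z)); exact: pivot_reduces.
have yx : y != x by apply: contraTneq xy => ->; rewrite (proj2 sG).
pose c1 z := perm_loc_ns G x z (c z).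
have c1y : c1 y = c y by rewrite /c1 /perm_loc_ns (negbTE yx) perm1.
have c1yP : c1 y = pivot_elt (loc_ns x G) y.
  apply/eqP; rewrite -ias_bit_diag; last by rewrite c1y.
  rewrite /c1 ias_bit_loc_ns //.
  by rewrite ias_bit_diag // (negbTE cyN) ias_bit_offdiag ?xy // eq_sym.
have [G1H d1 dS] := pivot_reduces (lsimple_loc_ns x sG) c1yP.
exists (loc_ns y (loc_ns x G)), (fun z => perm_loc_ns (loc_ns x G) y z (c1 z)); split.
- exact: loc_equiv_trans (loc_step_ns x (loc_refl G)) G1H.
- by rewrite d1; exact: choice_nullity_loc_ns.
apply: leq_trans dS _; apply/subset_leq_card/subsetP => z.
rewrite !inE /c1 /perm_loc_ns.
by case: (eqVneq z x) => [-> _|_]; [rewrite inE in Sx | rewrite perm1].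
Qed.

Lemma stable_of_choice G c : lsimple G ->
  exists H, [/\ lsimple H, loc_equiv G H &
                exists S, stable H S /\ #|S| = choice_nullity G c].
Proof.
have [m] := ubnP #|choice_support c|; elim: m G c => // m IH G c ltSm sG.
set S := choice_support c.
case: (pickP [pred xy : V * V | [&& xy.1 \in S, xy.2 \in S & ias_bit G (c xy.1) xy.1 xy.2]])
  => [[x y] /and3P[/= Sx Sy bit] | none].
  have [H [d [GH dn dS]]] : exists H d, reduces_to G c H d.
    have cx : c x != kphi by rewrite inE in Sx.
    case: (eqVneq y x) bit => [-> | yx] bit.
      exists (loc_ns x G), (fun z => perm_loc_ns G x z (c z)).
      by apply: pivot_reduces => //; apply/eqP; rewrite -ias_bit_diag.
    by apply: (edge_reduces sG Sy Sx); rewrite -(ias_bit_offdiag G cx yx).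
  have [K [sK HK [T [stT ET]]]] := IH H d (leq_trans dS ltSm) (loc_equiv_lsimple GH sG).
  exists K; split => //; first exact: loc_equiv_trans GH HK.
  by exists T; rewrite ET dn.
exists G; split => //; first exact: loc_refl.
have bit0 : {in S &, forall x y, ~~ ias_bit G (c x) x y}.
  by move=> x y Sx Sy; have := none (x, y); rewrite /= Sx Sy /= => /negbT.
exists S; split; last by rewrite choice_nullity_support.
move=> x y Sx Sy; have [->|xy] := eqVneq x y; first exact: (proj2 sG).
have cy : c y != kphi by rewrite inE in Sy.
by rewrite -(ias_bit_offdiag G cy xy); apply/negbTE/bit0.
Qed.

End StableSets.

Theorem corollary1p3 (V : finType) (G : lgraph V) (nu : nat) :
  lsimple G -> (0 < nu)%N ->
  (has_transverse_nullity G nu <->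
   exists H : lgraph V,
     [/\ lsimple H, loc_equiv G H &
         exists S : {set V}, stable H S /\ #|S| = nu]).
Proof.
move=> sG _; split => [/has_transverse_nullityP[c <-] | [H [_ GH [S [stS <-]]]]].
  exact: stable_of_choice.
apply/has_transverse_nullityP; have [d <-] := stable_choice_nullity stS.
exact: loc_equiv_choice_nullity.
Qed.
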